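(* Let $X$ be a finite set with $|X|=n$, $0\notin X$, $W=X\cup\{0\}$. Let $\mathfrak{V}$ be a $\big(\binom{n}{2}_{\,n-2}\ \binom{n}{3}_{\,3}\big)$-configuration whose point set is $\mathcal{P}_2(X)$, and let $\mathfrak{M}$ be the structure with point set $\mathcal{P}_2(W)$ whose lines are the lines of $\mathfrak{V}$ together with all sets $\{\{0,x\},\{0,y\},\{x,y\}\}$ for distinct $x,y\in X$. If $H$ is a hyperplane of $\mathfrak{M}$, then there is a subset $A$ of $W$ such that $H=\mathcal{H}(A\,|\,W\setminus A):=\mathcal{P}_2(A)\cup\mathcal{P}_2(W\setminus A)$.
   Context: $\mathcal{P}_2(Y)$ denotes the set of $2$-element subsets of $Y$. A $(v_r\ b_k)$-configuration is a partial linear space with $v$ points and $b$ lines, each point on exactly $r$ lines and each line containing exactly $k$ points. (Every binomial partial Steiner triple system with $\binom{n+1}{2}$ points freely containing a complete graph $K_n$ is isomorphic to such an $\mathfrak{M}$.) A subspace is a set of points containing every line that meets it in at least two points; a hyperplane is a proper subspace meeting every line. *)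

From mathcomp Require Import all_boot.
Set Implicit Arguments. Unset Strict Implicit. Unset Printing Implicit Defensive.

Definition P2 (T : finType) (A : {set T}) : {set {set T}} :=
  [set p : {set T} | (p \subset A) && (#|p| == 2)].

Definition configuration (T : finType) (P : {set T}) (Ls : {set {set T}})
    (v r b k : nat) : Prop :=
  [/\ #|P| = v, #|Ls| = b,
      (forall L, L \in Ls -> L \subset P /\ #|L| = k),
      (forall p, p \in P -> #|[set L in Ls | p \in L]| = r) &
      (forall L1 L2, L1 \in Ls -> L2 \in Ls -> L1 != L2 -> #|L1 :&: L2| <= 1)].

Definition subspace (T : finType) (P : {set T}) (Ls : {set {set T}})
    (S : {set T}) : Prop :=
  S \subset P /\ (forall L, L \in Ls -> 1 < #|L :&: S| -> L \subset S).

Definition hyperplane (T : finType) (P : {set T}) (Ls : {set {set T}})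
    (H : {set T}) : Prop :=
  [/\ subspace P Ls H, H \proper P &
      (forall L, L \in Ls -> L :&: H != set0)].

(* W = X ∪ {0} is modelled as option X, with None playing the role of 0. *)
Definition liftP (X : finType) (p : {set X}) : {set option X} := Some @: p.
Definition liftL (X : finType) (L : {set {set X}}) : {set {set option X}} :=
  (@liftP X) @: L.

Definition triangles (X : finType) : {set {set {set option X}}} :=
  [set T : {set {set option X}} | [exists x : X, exists y : X,
     (x != y) && (T == [set [set None; Some x]; [set None; Some y];
                           [set Some x; Some y]])]].

Definition M_lines (X : finType) (V : {set {set {set X}}}) :
    {set {set {set option X}}} :=
  ((@liftL X) @: V) :|: triangles X.

Definition Hsplit (W : finType) (A : {set W}) : {set {set W}} :=
  P2 A :|: P2 (~: A).

From mathcomp Require Import all_boot.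
Set Implicit Arguments. Unset Strict Implicit. Unset Printing Implicit Defensive.

(** A hyperplane meets every three-point line in one or in all three of its
    points.  Every pair [{x, y}] of [X] lies on the triangle line through
    [{0, x}] and [{0, y}], so membership of [{x, y}] in [H] is determined by
    whether [{0, x}] and [{0, y}] lie on the same side of [H]; taking [A] to be
    [0] together with the [x] such that [{0, x}] is in [H] gives
    [H = P2 A :|: P2 (~: A)]. *)

Section Subspaces.

Variables (T : finType) (P : {set T}) (Ls : {set {set T}}) (S : {set T}).
Hypothesis subS : subspace P Ls S.

Lemma subspace_line_sub {L : {set T}} {u v : T} :
  L \in Ls -> u != v -> u \in L -> v \in L -> u \in S -> v \in S ->
  L \subset S.
Proof.
case: subS => _ closedS Ls_L uv uL vL uS vS; apply: (closedS _ Ls_L).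
have : [set u; v] \subset L :&: S.
  by apply/subsetP=> z; rewrite !inE => /orP[] /eqP ->; rewrite ?uL ?vL ?uS ?vS.
by move/subset_leq_card; rewrite cards2 uv.
Qed.

Lemma subspace_line3 (p q r : T) :
  [set p; q; r] \in Ls -> [&& p != q, p != r & q != r] ->
  [set p; q; r] :&: S != set0 ->
  (r \in S) = ((p \in S) == (q \in S)).
Proof.
move=> Ls_L /and3P[pq pr qr] meetS.
have pL : p \in [set p; q; r] by rewrite !inE eqxx.
have qL : q \in [set p; q; r] by rewrite !inE eqxx orbT.
have rL : r \in [set p; q; r] by rewrite !inE eqxx !orbT.
case pS: (p \in S); case qS: (q \in S) => /=.
- exact: (subsetP (subspace_line_sub Ls_L pq pL qL pS qS) _ rL).
- apply/negP=> rS; move: (subsetP (subspace_line_sub Ls_L pr pL rL pS rS) _ qL).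
  by rewrite qS.
- apply/negP=> rS; move: (subsetP (subspace_line_sub Ls_L qr qL rL qS rS) _ pL).
  by rewrite pS.
- apply/negP=> rS; case/set0Pn: meetS => z; rewrite !inE.
  by case/andP; case/orP=> [/orP[]|] /eqP ->; rewrite ?pS ?qS ?rS.
Qed.

End Subspaces.

Lemma pair_eq_pair (W : finType) (a b c : W) :
  ([set a; b] == [set a; c]) = (b == c).
Proof.
apply/eqP/eqP=> [e|-> //].
have : b \in [set a; c] by rewrite -e !inE eqxx orbT.
rewrite !inE => /orP[/eqP ab|/eqP //].
have : c \in [set a; b] by rewrite e !inE eqxx orbT.
by rewrite !inE -ab orbb => /eqP ->.
Qed.

Lemma mem_Hsplit_pair (W : finType) (A : {set W}) (a b : W) : a != b ->
  ([set a; b] \in Hsplit A) = ((a \in A) == (b \in A)).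
Proof.
move=> ab; rewrite /Hsplit /P2 !inE cards2 ab !andbT !subUset !sub1set !inE.
by case: (a \in A); case: (b \in A).
Qed.

Lemma Hsplit_sub_P2 (W : finType) (A : {set W}) : Hsplit A \subset P2 [set: W].
Proof.
by apply/subsetP=> p; rewrite /Hsplit /P2 !inE !subsetT => /orP[] /andP[].
Qed.

Lemma eq_pair_sets (W : finType) (F G : {set {set W}}) :
  F \subset P2 [set: W] -> G \subset P2 [set: W] ->
  (forall a b : W, a != b -> ([set a; b] \in F) = ([set a; b] \in G)) ->
  F = G.
Proof.
move=> /subsetP sF /subsetP sG eqFG; apply/setP=> p.
have pair_of_mem (E : {set {set W}}) : {subset E <= P2 [set: W]} ->
    p \in E -> exists a b, [/\ a != b & p = [set a; b]].
  by move=> sE /sE; rewrite inE => /andP[_ /cards2P].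
apply/idP/idP=> [/[dup] /(pair_of_mem F sF) | /[dup] /(pair_of_mem G sG)].
  by case=> a [b [ab ->]]; rewrite eqFG.
by case=> a [b [ab ->]]; rewrite -eqFG.
Qed.

Section TriangleLines.

Variables (X : finType) (V : {set {set {set X}}}).

Lemma triangle_in_M_lines {x y : X} : x != y ->
  [set [set None; Some x]; [set None; Some y]; [set Some x; Some y]]
    \in M_lines V.
Proof.
move=> xy; rewrite /M_lines inE; apply/orP; right; rewrite inE.
by apply/existsP; exists x; apply/existsP; exists y; rewrite xy eqxx.
Qed.

Lemma triangle_points_uniq {x y : X} : x != y ->
  [&& [set None; Some x] != [set None; Some y],
      [set None; Some x] != [set Some x; Some y] &
      [set None; Some y] != [set Some x; Some y]].
Proof.
have None_notin : None \notin [set Some x; Some y] by rewrite !inE.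
move=> xy; rewrite pair_eq_pair /= xy /=.
by apply/andP; split; apply: contraNneq None_notin => <-; rewrite !inE eqxx.
Qed.

Variable H : {set {set option X}}.
Hypothesis hH : hyperplane (P2 [set: option X]) (M_lines V) H.

Lemma hyperplane_triangle_edge {x y : X} : x != y ->
  ([set Some x; Some y] \in H) =
  (([set None; Some x] \in H) == ([set None; Some y] \in H)).
Proof.
case: hH => subH _ meetH xy; have line := triangle_in_M_lines xy.
exact (subspace_line3 subH line (triangle_points_uniq xy) (meetH _ line)).
Qed.

Definition hyperplane_side : {set option X} :=
  [set w | if w is Some x then [set None; Some x] \in H else true].

Lemma hyperplane_pair (a b : option X) : a != b ->
  ([set a; b] \in H) = ((a \in hyperplane_side) == (b \in hyperplane_side)).
Proof.
move: a b => [x|] [y|] //= ab; rewrite !inE /=.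
- by apply: hyperplane_triangle_edge; apply: contraNneq ab => ->.
- by rewrite setUC eqb_id.
- by rewrite eq_sym eqb_id.
Qed.

End TriangleLines.

Theorem theorem3p5 (X : finType) (V : {set {set {set X}}})
    (hV : configuration (P2 [set: X]) V 'C(#|X|, 2) (#|X| - 2) 'C(#|X|, 3) 3)
    (H : {set {set option X}})
    (hH : hyperplane (P2 [set: option X]) (M_lines V) H) :
  exists A : {set option X}, H = Hsplit A.
Proof.
exists (hyperplane_side H); apply: eq_pair_sets (Hsplit_sub_P2 _) _.
  by case: hH => [[]].
by move=> a b ab; rewrite mem_Hsplit_pair // (hyperplane_pair hH ab).
Qed.
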